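(* The quantum channel $\Pi(\rho)=\sum_{i=1}^d\langle i|\rho|i\rangle\,\tau_i$ is the unique quantum channel $\mathcal P$ on $S$ that (1) is activity breaking; (2) satisfies $\mathcal P(\mathsf{St}(S))=\mathsf P(S)$; (3) is covariant under the time evolution, i.e. $\mathcal U_t\circ\mathcal P=\mathcal P\circ\mathcal U_t$ for all $t\in\mathbb R$, where $\mathcal U_t(\rho)=e^{-itH}\rho e^{itH}$; and (4) preserves the energy ordering of the eigenstates, i.e. $\mathrm{Tr}[H\mathcal P(|i\rangle\langle i|)]\le\mathrm{Tr}[H\mathcal P(|j\rangle\langle j|)]$ for all $i\le j$.
   Context: $S$ is a $d$-dimensional quantum system with non-degenerate Hamiltonian $H=\sum_i E_i|i\rangle\langle i|$, $E_1<\dots<E_d$. $\mathsf{St}(S)$ is the set of density matrices; $\mathsf P(S)$ is the set of passive states, i.e. states $\sum_ip_i|i\rangle\langle i|$ with $p_1\ge\dots\ge p_d$. A channel is activity breaking if it maps every state into $\mathsf P(S)$. For $j=1,\dots,d$, $\tau_j=\frac1j\sum_{i=1}^j|i\rangle\langle i|$. *)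

From mathcomp Require Import all_boot all_order all_algebra all_reals.
From mathcomp Require Import complex.
From mathcomp Require Import normedtype trigo.

Set Implicit Arguments.
Unset Strict Implicit.
Unset Printing Implicit Defensive.

Import Order.TTheory GRing.Theory Num.Theory.
Local Open Scope ring_scope.

Section Quantum.
Variable R : realType.
Local Notation C := R[i].

Definition adj {m n} (A : 'M[C]_(m, n)) : 'M[C]_(n, m) :=
  (map_mx (fun z => z^*) A)^T.

(* positive semidefinite kernel over a finite index type:
   v^dagger A v >= 0 (i.e. real and nonnegative) for all vectors v *)
Definition psdF (I : finType) (A : I -> I -> C) : Prop :=
  forall v : I -> C, 0 <= \sum_(x : I) \sum_(y : I) (v x)^* * A x y * v y.

Definition psd {d} (A : 'M[C]_d) : Prop := psdF (fun i j => A i j).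

Definition is_state {d} (rho : 'M[C]_d) : Prop := psd rho /\ \tr rho = 1.

(* P(S): passive states sum_i p_i |i><i| with p_1 >= ... >= p_d
   (index 0 = lowest energy level) *)
Definition passive {d} (rho : 'M[C]_d) : Prop :=
  is_state rho /\ is_diag_mx rho /\
  (forall i j : 'I_d, (i <= j)%N -> rho j j <= rho i i).

Definition linear_map {d} (P : 'M[C]_d -> 'M[C]_d) : Prop :=
  forall (a : C) (A B : 'M[C]_d), P (a *: A + B) = a *: P A + P B.

(* (id_n (x) P) applied to an operator X on C^n (x) C^d *)
Definition ampliation {d} (n : nat) (P : 'M[C]_d -> 'M[C]_d)
  (X : 'I_n * 'I_d -> 'I_n * 'I_d -> C) : 'I_n * 'I_d -> 'I_n * 'I_d -> C :=
  fun ai bj => P (\matrix_(i, j) X (ai.1, i) (bj.1, j)) ai.2 bj.2.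

Definition completely_positive {d} (P : 'M[C]_d -> 'M[C]_d) : Prop :=
  forall (n : nat) (X : 'I_n * 'I_d -> 'I_n * 'I_d -> C),
    psdF X -> psdF (ampliation P X).

Definition trace_preserving {d} (P : 'M[C]_d -> 'M[C]_d) : Prop :=
  forall A, \tr (P A) = \tr A.

Definition quantum_channel {d} (P : 'M[C]_d -> 'M[C]_d) : Prop :=
  [/\ linear_map P, completely_positive P & trace_preserving P].

Definition activity_breaking {d} (P : 'M[C]_d -> 'M[C]_d) : Prop :=
  forall rho, is_state rho -> passive (P rho).

Definition proj {d} (i : 'I_d) : 'M[C]_d := delta_mx i i.

(* tau_j = (1/j) sum_{i<=j} |i><i| ; with 0-based index j this is
   1/(j+1) sum_{i <= j} |i><i| *)
Definition tau {d} (j : 'I_d) : 'M[C]_d :=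
  (j.+1%:R)^-1 *: \sum_(i < d | (i <= j)%N) proj i.

Definition Pi {d} (rho : 'M[C]_d) : 'M[C]_d := \sum_(i < d) rho i i *: tau i.

Definition ham {d} (E : 'I_d -> R) : 'M[C]_d := diag_mx (\row_k ((E k)%:C)%C).

Definition expi (x : R) : C := (cos x +i* sin x)%C.

Definition evol {d} (E : 'I_d -> R) (t : R) : 'M[C]_d :=
  diag_mx (\row_k expi (- (t * E k))).

Definition Ut {d} (E : 'I_d -> R) (t : R) (rho : 'M[C]_d) : 'M[C]_d :=
  evol E t *m rho *m adj (evol E t).

Definition four_properties {d} (E : 'I_d -> R) (P : 'M[C]_d -> 'M[C]_d) : Prop :=
  [/\ activity_breaking P,
      (forall sigma, (exists rho, is_state rho /\ P rho = sigma) <-> passive sigma),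
      (forall (t : R) (rho : 'M[C]_d), Ut E t (P rho) = P (Ut E t rho))
    & (forall i j : 'I_d, (i <= j)%N ->
         \tr (ham E *m P (proj i)) <= \tr (ham E *m P (proj j)))].

End Quantum.

From mathcomp Require Import all_boot all_order all_algebra all_reals.
From mathcomp Require Import complex.
From mathcomp Require Import normedtype trigo.
From mathcomp Require Import ring zify.
Set Implicit Arguments.
Unset Strict Implicit.
Unset Printing Implicit Defensive.

Import Order.TTheory GRing.Theory Num.Theory.
Local Open Scope ring_scope.

(* Pi(rho) is the diagonal matrix whose k-th entry is sum_(i >= k) rho_ii/(i+1)
   (PiE).  From this formula, Pi is linear and trace preserving, completely
   positive (it only redistributes the diagonal of its input with nonnegative
   weights), commutes with the diagonal unitaries U_t, maps states onto the
   passive states (the passive state with decreasing diagonal p is the image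
   of the diagonal state with weights (i+1)(p_i - p_(i+1))), and
   Pi(|i><i|) = tau_i has energy the mean of the i+1 lowest levels, which
   increases strictly with i.

   Conversely, let P be a channel with the four properties.  Since P maps the
   pure states of (|a> + c|b>)/sqrt(1+|c|^2) to diagonal matrices, the choices
   c = 1, i kill the off-diagonal entries of P(|a><b|) for a <> b, and
   covariance at a time producing the relative phase i kills its diagonal;
   hence P(X) = sum_i X_ii P(|i><i|).  Writing tau_j = P(rho) and comparing
   (j,j) entries, using that a passive sigma has sigma_jj <= 1/(j+1) with
   equality only at tau_j, yields an i with P(|i><i|) = tau_j.  The energy
   ordering makes j |-> i strictly increasing on 'I_d, hence the identity,
   and therefore P = Pi. *)

Lemma sum_ord_prefix (V : nmodType) (n j : nat) (f : nat -> V) : (j < n)%N ->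
  \sum_(k < n) (if (k <= j)%N then f k else 0) = \sum_(0 <= k < j.+1) f k.
Proof.
move=> jn; rewrite -(big_mkord xpredT (fun k => if (k <= j)%N then f k else 0)).
rewrite (big_cat_nat _ (n := j.+1)) //= [X in _ + X]big_nat_cond.
rewrite [X in _ + X]big1 ?addr0 => [|k /andP[/andP[jk _] _]]; last by rewrite leqNgt jk.
by apply: eq_big_nat => k /andP[_ kj]; rewrite -ltnS kj.
Qed.

Lemma sum_ord_suffix (V : nmodType) (n j : nat) (f : nat -> V) : (j <= n)%N ->
  \sum_(k < n) (if (j <= k)%N then f k else 0) = \sum_(j <= k < n) f k.
Proof.
move=> jn; rewrite -(big_mkord xpredT (fun k => if (j <= k)%N then f k else 0)).
rewrite (big_cat_nat _ (n := j)) //= [X in X + _]big_nat_cond.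
rewrite [X in X + _]big1 ?add0r => [|k /andP[/andP[_ kj] _]]; last by rewrite leqNgt kj.
by apply: eq_big_nat => k /andP[jk _]; rewrite jk.
Qed.

Lemma sum_pair (V : nmodType) (I J : finType) (F : I * J -> V) :
  \sum_p F p = \sum_a \sum_j F (a, j).
Proof. by rewrite pair_bigA; apply: eq_bigr => -[a j] _. Qed.

(* A strictly increasing self-map of 'I_n is the identity: it lies above the
   identity by induction, and below it by the same argument applied to its
   conjugate under the order reversal of 'I_n. *)
Lemma incr_ord_ge (n : nat) (f : 'I_n -> 'I_n) :
  {homo f : i j / (i < j)%N} -> forall i : 'I_n, (i <= f i)%N.
Proof.
move=> f_incr [m mlt]; elim: m mlt => [//|i IH] ilt.
have ilt' : (i < n)%N := ltnW ilt.
exact: leq_ltn_trans (IH ilt') (f_incr (Ordinal ilt') (Ordinal ilt) (ltnSn i)).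
Qed.

Lemma incr_ord_id (n : nat) (f : 'I_n -> 'I_n) :
  {homo f : i j / (i < j)%N} -> f =1 id.
Proof.
move=> f_incr i; apply/val_inj/eqP => /=; rewrite eqn_leq incr_ord_ge // andbT.
pose g (j : 'I_n) := rev_ord (f (rev_ord j)).
have g_incr : {homo g : x y / (x < y)%N}.
  move=> x y xy; have rev_lt : (rev_ord y < rev_ord x)%N.
    by rewrite /=; have := ltn_ord y; lia.
  have := f_incr _ _ rev_lt; have := ltn_ord (f (rev_ord x)).
  by rewrite /g /=; lia.
have := incr_ord_ge g_incr (rev_ord i); rewrite /g /= rev_ordK /=.
have := ltn_ord (f i); have := ltn_ord i; lia.
Qed.

Definition running_mean (R : realFieldType) (e : nat -> R) (n : nat) : R :=
  (\sum_(0 <= k < n.+1) e k) / n.+1%:R.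

Lemma running_mean_lt (R : realFieldType) (e : nat -> R) (N : nat) :
  (forall k l, (k < l)%N -> (l < N)%N -> e k < e l) ->
  forall m n, (m < n)%N -> (n < N)%N -> running_mean e m < running_mean e n.
Proof.
move=> e_incr.
have stepS n : (n.+1 < N)%N -> running_mean e n < running_mean e n.+1.
  move=> nN; rewrite /running_mean [X in _ < X / _]big_nat_recr //=.
  set S := \sum_(0 <= k < n.+1) e k.
  have S_lt : S < e n.+1 * n.+1%:R.
    rewrite mulr_natr -[in X in _ *+ X](subn0 n.+1) -sumr_const_nat.
    by apply: ltr_sum_nat => // k /andP[_ kn]; apply: e_incr.
  rewrite ltr_pdivlMr ?ltr0n //.
  have -> : S / n.+1%:R * n.+2%:R = S + S / n.+1%:R.
    by rewrite -(natr1 (R := R) n.+1) mulrDr mulr1 divfK // pnatr_eq0.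
  by rewrite ltrD2l ltr_pdivrMr ?ltr0n.
move=> m; elim=> // n IH; rewrite ltnS leq_eqVlt => /orP[/eqP -> nN|mn nN].
  exact: stepS.
exact: lt_trans (IH mn (ltnW nN)) (stepS n nN).
Qed.

Section PassivisingChannel.
Variable R : realType.
Local Notation C := R[i].
Variable d : nat.
Implicit Types (M X rho sigma : 'M[C]_d) (P : 'M[C]_d -> 'M[C]_d).

Lemma psd_diag_ge0 M (x : 'I_d) : psd M -> 0 <= M x x.
Proof.
move=> M_psd; have := M_psd (fun y => (y == x)%:R).
rewrite (bigD1 x) //= [X in _ + X]big1 => [|y /negbTE yx]; last first.
  by apply: big1 => z _; rewrite yx rmorph0 !mul0r.
rewrite addr0 (bigD1 x) //= [X in _ + X]big1 => [|y /negbTE yx]; last by rewrite yx mulr0.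
by rewrite addr0 eqxx rmorph1 mul1r mulr1.
Qed.

Lemma psd_diag M : (forall x y, x != y -> M x y = 0) -> (forall x, 0 <= M x x) -> psd M.
Proof.
move=> M_diag M_ge0 v; apply: sumr_ge0 => x _.
rewrite (bigD1 x) //= big1 ?addr0 => [|y yx]; last by rewrite M_diag ?mulr0 ?mul0r // eq_sym.
by rewrite mulrAC mulr_ge0 // mulrC mul_conjC_ge0.
Qed.

Lemma psd_rank1 (w : 'I_d -> C) : psd (\matrix_(x, y) (w x * (w y)^*)).
Proof.
move=> v.
rewrite (eq_bigr (fun x => ((v x)^* * w x) * \sum_y ((w y)^* * v y))); last first.
  by move=> x _; rewrite mulr_sumr; apply: eq_bigr => y _; rewrite mxE; ring.
rewrite -mulr_suml.
have -> : \sum_y (w y)^* * v y = (\sum_x (v x)^* * w x)^*.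
  by rewrite rmorph_sum; apply: eq_bigr => y _; rewrite rmorphM /= conjCK mulrC.
exact: mul_conjC_ge0.
Qed.

Lemma psdZ (a : C) M : 0 <= a -> psd M -> psd (a *: M).
Proof.
move=> a_ge0 M_psd v; rewrite (eq_bigr (fun x => a * \sum_y (v x)^* * M x y * v y)).
  by rewrite -mulr_sumr mulr_ge0.
by move=> x _; rewrite mulr_sumr; apply: eq_bigr => y _; rewrite mxE; ring.
Qed.

Lemma psd_normalised_state M : psd M -> 0 < \tr M -> is_state ((\tr M)^-1 *: M).
Proof.
move=> M_psd trM_gt0; split; first by apply: psdZ; rewrite // invr_ge0 ltW.
by rewrite mxtraceZ mulVf // lt0r_neq0.
Qed.

Lemma tr_delta (a b : 'I_d) : \tr (delta_mx a b : 'M[C]_d) = (a == b)%:R.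
Proof.
rewrite /mxtrace (bigD1 a) //= big1 ?addr0 => [|k /negbTE ka]; last by rewrite mxE ka.
by rewrite mxE eqxx eq_sym.
Qed.

Lemma proj_state (i : 'I_d) : is_state (proj R i).
Proof.
split; last by rewrite /proj tr_delta eqxx.
apply: psd_diag => [x y xy|x]; rewrite /proj mxE; last by case: (_ && _).
by case: (eqVneq x i) => [xi|] //=; rewrite -xi eq_sym (negbTE xy).
Qed.

Section LinearMap.
Variable P : 'M[C]_d -> 'M[C]_d.
Hypothesis P_lin : linear_map P.

Lemma linear_map0 : P 0 = 0.
Proof.
have := P_lin 1 0 0; rewrite scale1r addr0 scale1r => P0.
by apply: (@addrI _ (P 0)); rewrite addr0 -P0.
Qed.

Lemma linear_mapZ a M : P (a *: M) = a *: P M.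
Proof. by have := P_lin a M 0; rewrite !addr0 linear_map0 addr0. Qed.

Lemma linear_mapD M M' : P (M + M') = P M + P M'.
Proof. by have := P_lin 1 M M'; rewrite !scale1r. Qed.

Lemma linear_map_sum (I : finType) (F : I -> 'M[C]_d) : P (\sum_i F i) = \sum_i P (F i).
Proof. by apply: big_morph; [exact: linear_mapD | exact: linear_map0]. Qed.

End LinearMap.

(* Passive states.  A passive sigma has sigma_jj <= 1/(j+1), since its j+1
   largest diagonal entries sum to at most one; equality forces sigma = tau_j. *)
Lemma tauE (j k l : 'I_d) :
  tau R j k l = if k == l then (if (k <= j)%N then (j.+1%:R)^-1 else 0) else 0.
Proof.
rewrite /tau mxE summxE /proj.
rewrite (eq_bigr (fun i => ((k == i) && (l == i))%:R)); last by move=> i _; rewrite mxE.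
case: eqP => [<-|/eqP kl]; last first.
  rewrite big1 ?mulr0 // => i _; case: (eqVneq k i) => [ki|] //=.
  by rewrite -ki eq_sym (negbTE kl).
case: (leqP k j) => kj.
  rewrite (bigD1 k) //= eqxx big1 ?addr0 ?mulr1 // => i /andP[_ ik].
  by rewrite eq_sym (negbTE ik).
rewrite big1 ?mulr0 // => i ij; case: eqP => //= ki.
by move: ij; rewrite -ki leqNgt kj.
Qed.

Lemma tr_tau (j : 'I_d) : \tr (tau R j) = 1.
Proof.
rewrite /mxtrace (eq_bigr (fun k : 'I_d => if (k <= j)%N then (j.+1%:R)^-1 else 0)).
  rewrite (@sum_ord_prefix _ d j (fun _ => (j.+1%:R)^-1 : C)) // sumr_const_nat subn0.
  by rewrite -[RHS](@mulVf _ (j.+1%:R)) ?pnatr_eq0 // mulr_natr.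
by move=> k _; rewrite tauE eqxx.
Qed.

Lemma passive_diag_le sigma (j : 'I_d) : passive sigma -> sigma j j * j.+1%:R <= 1.
Proof.
move=> [[sigma_psd sigma_tr] [_ sigma_decr]].
rewrite mulr_natr -sigma_tr.
have := @sum_ord_prefix _ d j (fun _ => sigma j j) (ltn_ord j).
rewrite sumr_const_nat subn0 => <-.
by apply: ler_sum => k _; case: ifP => kj; [exact: sigma_decr | exact: psd_diag_ge0].
Qed.

Lemma passive_diag_eq sigma (j : 'I_d) :
  passive sigma -> sigma j j = (j.+1%:R)^-1 -> sigma = tau R j.
Proof.
move=> [[sigma_psd sigma_tr] [/is_diag_mxP sigma_diag sigma_decr]] sigma_jj.
have diag_eq k : sigma k k - tau R j k k = 0.
  apply: (@psumr_eq0P _ _ xpredT (fun k => sigma k k - tau R j k k)) => // [x _|].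
    rewrite tauE eqxx subr_ge0; case: ifP => xj; last exact: psd_diag_ge0.
    by rewrite -sigma_jj; apply: sigma_decr.
  by rewrite sumrB -/(mxtrace _) -/(mxtrace (tau R j)) sigma_tr tr_tau subrr.
apply/matrixP => k l; case: (eqVneq k l) => [<-|kl].
  by apply/eqP; rewrite -subr_eq0 diag_eq.
by rewrite sigma_diag // tauE ifN.
Qed.

Definition weight (k i : nat) : C := if (k <= i)%N then (i.+1%:R)^-1 else 0.

Lemma weight_ge0 k i : 0 <= weight k i.
Proof. by rewrite /weight; case: ifP => // _; rewrite invr_ge0 ler0n. Qed.

Lemma PiE rho (k l : 'I_d) :
  Pi rho k l = if k == l then \sum_(i : 'I_d) weight k i * rho i i else 0.
Proof.
rewrite /Pi summxE; case: eqP => [<-|/eqP kl].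
  by apply: eq_bigr => i _; rewrite mxE tauE eqxx /weight mulrC.
by rewrite big1 // => i _; rewrite mxE tauE (negbTE kl) mulr0.
Qed.

Lemma Pi_proj (i : 'I_d) : Pi (proj R i) = tau R i.
Proof.
rewrite /Pi (bigD1 i) //= big1 ?addr0 => [|k /negbTE ki]; last by rewrite /proj mxE ki scale0r.
by rewrite /proj mxE eqxx scale1r.
Qed.

Lemma Pi_linear : linear_map (@Pi R d).
Proof.
move=> a M M'; rewrite /Pi scaler_sumr -big_split /=; apply: eq_bigr => i _.
by rewrite !mxE scalerDl scalerA.
Qed.

Lemma Pi_trace_preserving : trace_preserving (@Pi R d).
Proof.
move=> M; transitivity (\sum_i \tr (M i i *: tau R i)); first exact: raddf_sum.
by apply: eq_bigr => i _; rewrite mxtraceZ tr_tau mulr1.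
Qed.

(* A map that keeps only the diagonal of its input and spreads it with
   nonnegative weights over the diagonal of its output is completely
   positive: its ampliation's quadratic form is a nonnegative combination of
   quadratic forms of the input. *)
Lemma diagonal_reweighting_cp P (c : 'I_d -> 'I_d -> C) :
  (forall k i, 0 <= c k i) ->
  (forall M k l, P M k l = if k == l then \sum_i c k i * M i i else 0) ->
  completely_positive P.
Proof.
move=> c_ge0 PE n X X_psd v; rewrite /ampliation.
pose Q (k i : 'I_d) := \sum_(a < n) \sum_(b < n) (v (a, k))^* * X (a, i) (b, i) * v (b, k).
have Q_ge0 k i : 0 <= Q k i.
  pose w (p : 'I_n * 'I_d) := if p.2 == i then v (p.1, k) else 0.
  have := X_psd w; congr (_ <= _); rewrite sum_pair; apply: eq_bigr => a _.
  rewrite (bigD1 i) //= [X in _ + X = _]big1 => [|x /negbTE xi]; last first.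
    by apply: big1 => q _; rewrite /w /= xi rmorph0 !mul0r.
  rewrite addr0 /w /= eqxx sum_pair; apply: eq_bigr => b _.
  rewrite (bigD1 i) //= big1 => [|y /negbTE yi]; last by rewrite /= yi mulr0.
  by rewrite addr0 /= eqxx.
suff -> : \sum_p \sum_q (v p)^* * P (\matrix_(i, j) X (p.1, i) (q.1, j)) p.2 q.2 * v q
    = \sum_k \sum_i c k i * Q k i.
  by apply: sumr_ge0 => k _; apply: sumr_ge0 => i _; rewrite mulr_ge0.
rewrite sum_pair.
transitivity (\sum_(a < n) \sum_k \sum_(b < n) \sum_i
    c k i * ((v (a, k))^* * X (a, i) (b, i) * v (b, k))).
  apply: eq_bigr => a _; apply: eq_bigr => k _; rewrite sum_pair; apply: eq_bigr => b _.
  rewrite (bigD1 k) //= big1 ?addr0 => [|l lk]; last by rewrite PE eq_sym (negbTE lk) mulr0 mul0r.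
  rewrite PE eqxx mulr_sumr mulr_suml; apply: eq_bigr => i _.
  by rewrite mxE; ring.
rewrite exchange_big; apply: eq_bigr => k _.
under eq_bigr do rewrite exchange_big.
rewrite exchange_big; apply: eq_bigr => i _; rewrite mulr_sumr.
by apply: eq_bigr => a _; rewrite mulr_sumr.
Qed.

Lemma Pi_cp : completely_positive (@Pi R d).
Proof. exact: diagonal_reweighting_cp (fun k i => weight_ge0 k i) PiE. Qed.

Lemma Pi_passive rho : is_state rho -> passive (Pi rho).
Proof.
move=> [rho_psd rho_tr].
have Pi_ge0 k : 0 <= Pi rho k k.
  by rewrite PiE eqxx; apply: sumr_ge0 => i _; rewrite mulr_ge0 ?weight_ge0 ?psd_diag_ge0.
split; [split|split].
- by apply: psd_diag => // x y xy; rewrite PiE ifN.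
- by rewrite Pi_trace_preserving.
- by apply/is_diag_mxP => x y xy; rewrite PiE ifN.
move=> i j ij; rewrite !PiE !eqxx; apply: ler_sum => k _.
rewrite ler_wpM2r ?psd_diag_ge0 // /weight; case: (leqP j k) => jk.
  by rewrite (leq_trans ij jk).
by case: ifP => _ //; rewrite invr_ge0 ler0n.
Qed.

(* Every passive state is the image of the diagonal state with weights
   (i+1)(sigma_ii - sigma_(i+1)(i+1)), by telescoping. *)
Lemma Pi_onto_passive sigma : passive sigma -> exists rho, is_state rho /\ Pi rho = sigma.
Proof.
move=> [[sigma_psd sigma_tr] [/is_diag_mxP sigma_diag sigma_decr]].
pose s n : C := if insub n is Some k then sigma k k else 0.
have sE (k : 'I_d) : s k = sigma k k.
  by rewrite /s; case: insubP => [u _ /val_inj ->|] //; rewrite ltn_ord.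
have s_d : s d = 0 by rewrite /s; case: insubP => [u|//]; rewrite ltnn.
have s_decr n : 0 <= s n - s n.+1.
  rewrite subr_ge0 /s; case: insubP => [u ud uE|nd]; last first.
    by case: insubP => [v vd _|//]; apply: psd_diag_ge0.
  case: insubP => [v _ vE|nd]; last by rewrite (ltn_trans (ltnSn n) ud) in nd.
  by apply: sigma_decr; rewrite uE vE.
pose rho : 'M[C]_d := diag_mx (\row_i (i.+1%:R * (s i - s i.+1))).
have Pi_rho : Pi rho = sigma.
  apply/matrixP => k l; rewrite PiE; case: eqP => [<-|/eqP kl]; last by rewrite sigma_diag.
  rewrite (eq_bigr (fun i : 'I_d => if (k <= i)%N then s i - s i.+1 else 0)); last first.
    move=> i _; rewrite /rho mxE eqxx mulr1n mxE /weight; case: ifP => _; last by rewrite mul0r.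
    by rewrite mulrA mulVf ?mul1r // pnatr_eq0.
  rewrite (@sum_ord_suffix _ d k (fun i => s i - s i.+1)) ?(ltnW (ltn_ord k)) //.
  rewrite (telescope_sumr_eq (fun n => - s n) _ (ltnW (ltn_ord k))) => [|i _]; last first.
    by rewrite opprK addrC.
  by rewrite s_d oppr0 add0r opprK sE.
exists rho; split => //; split; last by rewrite -Pi_trace_preserving Pi_rho.
apply: psd_diag => [x y xy|x]; rewrite /rho mxE; first by rewrite (negbTE xy) mulr0n.
by rewrite eqxx mulr1n mxE mulr_ge0 ?ler0n.
Qed.

(* Time evolution acts entrywise by phases, which cancel on the diagonal. *)
Lemma expiJ (x : R) : expi x * (expi x)^* = 1.
Proof.
apply/eqP; rewrite eq_complex /=; apply/andP; split; apply/eqP.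
  by rewrite mulrN opprK -!expr2 cos2Dsin2.
by rewrite mulrN mulrC addrC subrr.
Qed.

Lemma expi_mulJ (x y : R) : expi x * (expi y)^* = expi (x - y).
Proof.
apply/eqP; rewrite eq_complex /=; apply/andP; split; apply/eqP.
  by rewrite cosB; ring.
by rewrite sinB; ring.
Qed.

Lemma conj_i : ('i%C : C)^* = - 'i%C.
Proof. by apply/eqP; rewrite eq_complex /= oppr0 !eqxx. Qed.

Lemma i_neq1 : ('i%C : C) != 1.
Proof. by rewrite eq_complex /= oner_eq0 andbF. Qed.

Lemma UtE (E : 'I_d -> R) t M k l :
  Ut E t M k l = expi (- (t * E k)) * M k l * (expi (- (t * E l)))^*.
Proof.
rewrite /Ut /evol /adj.
have -> : (map_mx (fun z : C => z^*) (diag_mx (\row_k expi (- (t * E k)))))^T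
    = diag_mx (\row_k (expi (- (t * E k)))^*).
  apply/matrixP => x y; rewrite !mxE rmorphMn eq_sym.
  by case: eqP => [->|]; rewrite ?mulr0n ?mulr1n.
by rewrite mul_mx_diag mul_diag_mx !mxE.
Qed.

Lemma Ut_diag (E : 'I_d -> R) t M k : Ut E t M k k = M k k.
Proof. by rewrite UtE mulrAC expiJ mul1r. Qed.

Lemma Pi_covariant (E : 'I_d -> R) t rho : Ut E t (Pi rho) = Pi (Ut E t rho).
Proof.
apply/matrixP => k l; rewrite UtE !PiE; case: eqP => [<-|_]; last by rewrite mulr0 mul0r.
rewrite mulrAC expiJ mul1r; apply: eq_bigr => i _.
by rewrite Ut_diag.
Qed.

Definition level (E : 'I_d -> R) (n : nat) : R := if insub n is Some k then E k else 0.

Lemma levelE (E : 'I_d -> R) (k : 'I_d) : level E k = E k.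
Proof. by rewrite /level; case: insubP => [u _ /val_inj ->|] //; rewrite ltn_ord. Qed.

Lemma energy_tau (E : 'I_d -> R) (j : 'I_d) :
  \tr (ham E *m tau R j) = (running_mean (level E) j)%:C%C.
Proof.
rewrite /mxtrace /ham mul_diag_mx.
rewrite (eq_bigr (fun k : 'I_d => if (k <= j)%N then (level E k)%:C%C / j.+1%:R else 0)).
  rewrite (@sum_ord_prefix _ d j (fun k => (level E k)%:C%C / j.+1%:R)) // -mulr_suml.
  by rewrite /running_mean rmorphM /= fmorphV rmorph_nat rmorph_sum.
by move=> k _; rewrite mxE [X in X * _]mxE tauE eqxx levelE; case: ifP; rewrite ?mulr0 // mulrC.
Qed.

Section OrderedLevels.
Variable E : 'I_d -> R.
Hypothesis E_incr : forall i j : 'I_d, (i < j)%N -> E i < E j.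

Lemma mean_level_lt (i j : 'I_d) :
  (i < j)%N -> running_mean (level E) i < running_mean (level E) j.
Proof.
move=> ij; apply: (running_mean_lt (N := d)) => // k l kl ld.
have kd := ltn_trans kl ld.
by rewrite -[k]/(val (Ordinal kd)) -[l]/(val (Ordinal ld)) !levelE E_incr.
Qed.

Lemma Pi_four_properties : four_properties E (@Pi R d).
Proof.
split.
- exact: Pi_passive.
- move=> sigma; split; last exact: Pi_onto_passive.
  by move=> [rho [rho_state <-]]; apply: Pi_passive.
- by move=> t rho; apply: Pi_covariant.
- move=> i j; rewrite leq_eqVlt => /orP[/eqP/val_inj -> //|ij].
  by rewrite !Pi_proj !energy_tau lecR ltW // mean_level_lt.
Qed.

Section Uniqueness.
Variable P : 'M[C]_d -> 'M[C]_d.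
Hypothesis P_lin : linear_map P.
Hypothesis P_ab : activity_breaking P.
Hypothesis P_cov : forall t rho, Ut E t (P rho) = P (Ut E t rho).

Lemma ab_psd_diag M : psd M -> 0 < \tr M -> is_diag_mx (P M).
Proof.
move=> M_psd trM_gt0.
have [_ [/is_diag_mxP P_diag _]] := P_ab (psd_normalised_state M_psd trM_gt0).
have -> : M = \tr M *: ((\tr M)^-1 *: M) by rewrite scalerA mulfV ?scale1r ?lt0r_neq0.
by apply/is_diag_mxP => x y xy; rewrite (linear_mapZ P_lin) mxE P_diag // mulr0.
Qed.

Lemma ab_proj_diag (i : 'I_d) : is_diag_mx (P (proj R i)).
Proof. by have [_ []] := P_ab (proj_state i). Qed.

(* Testing P on the pure state along |a> + c|b> relates the off-diagonal
   entries of P(|a><b|) and P(|b><a|). *)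
Lemma offdiag_relation (a b : 'I_d) (c : C) (k l : 'I_d) : a != b -> k != l ->
  c^* * P (delta_mx a b) k l + c * P (delta_mx b a) k l = 0.
Proof.
move=> ab kl; pose w (x : 'I_d) := (x == a)%:R + c * (x == b)%:R.
have wwE : \matrix_(x, y) (w x * (w y)^*) =
    proj R a + c^* *: delta_mx a b + c *: delta_mx b a + (c * c^*) *: proj R b.
  apply/matrixP => x y; rewrite /proj !mxE /w -!mulnb !natrM.
  by rewrite rmorphD rmorphM /= !conjC_nat; ring.
have tr_ww : 0 < \tr (\matrix_(x, y) (w x * (w y)^*)).
  rewrite wwE !mxtraceD !mxtraceZ /proj !tr_delta eqxx (negbTE ab) eq_sym (negbTE ab).
  by rewrite eqxx /= !mulr0 !addr0 mulr1 ltr_pwDl ?mul_conjC_ge0 ?ltr01.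
have /is_diag_mxP/(_ k l kl) := ab_psd_diag (psd_rank1 w) tr_ww.
rewrite wwE !(linear_mapD P_lin) !(linear_mapZ P_lin) !mxE.
move: (ab_proj_diag a) (ab_proj_diag b) => /is_diag_mxP-> // /is_diag_mxP-> //.
by rewrite mulr0 add0r addr0.
Qed.

Lemma offdiag_zero (a b : 'I_d) (k l : 'I_d) : a != b -> k != l -> P (delta_mx a b) k l = 0.
Proof.
move=> ab kl; set x := P (delta_mx a b) k l; set y := P (delta_mx b a) k l.
have := offdiag_relation 1 ab kl; rewrite conjC1 !mul1r -/x -/y => xy.
have := offdiag_relation 'i%C ab kl; rewrite conj_i -/x -/y => ixy.
have two_i_x : ('i%C *+ 2) * x = 0.
  have -> : ('i%C *+ 2) * x = 'i%C * (x + y) - (- 'i%C * x + 'i%C * y) by ring.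
  by rewrite xy ixy mulr0 subr0.
have two_i_neq0 : ('i%C : C) *+ 2 != 0.
  by rewrite mulrn_eq0 /= eq_complex /= oner_eq0 andbF.
by apply/eqP; move/eqP: two_i_x; rewrite mulf_eq0 (negbTE two_i_neq0).
Qed.

(* Covariance multiplies P(|a><b|) by the relative phase of a and b, which
   does not act on the diagonal; a time with relative phase i kills it. *)
Lemma diag_zero (a b : 'I_d) (k : 'I_d) : a != b -> P (delta_mx a b) k k = 0.
Proof.
move=> ab; have Eab : E b - E a != 0.
  rewrite subr_eq0; case: (ltngtP a b) => [lt|lt|/val_inj eq].
  - by rewrite gt_eqF ?E_incr.
  - by rewrite lt_eqF ?E_incr.
  - by rewrite eq eqxx in ab.
pose t := (pi / 2) / (E b - E a).
have phase : expi (- (t * E a)) * (expi (- (t * E b)))^* = 'i%C.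
  rewrite expi_mulJ opprK addrC -mulrBr /t divfK // /expi cos_pihalf sin_pihalf.
  by apply/eqP; rewrite eq_complex /= !eqxx.
have Ut_ab : Ut E t (delta_mx a b) = 'i%C *: delta_mx a b.
  apply/matrixP => x y; rewrite UtE !mxE.
  by case: (eqVneq x a) => [->|xa]; case: (eqVneq y b) => [->|yb];
    rewrite /= ?mulr1 ?mulr0 ?mul0r ?phase.
have := Ut_diag E t (P (delta_mx a b)) k; rewrite P_cov Ut_ab (linear_mapZ P_lin) mxE.
move/eqP; rewrite -[X in _ == X]mul1r -subr_eq0 -mulrBl mulf_eq0 subr_eq0.
by rewrite (negbTE i_neq1) => /eqP.
Qed.

Lemma expand_diag X : P X = \sum_i X i i *: P (proj R i).
Proof.
rewrite {1}(matrix_sum_delta X) (linear_map_sum P_lin); apply: eq_bigr => i _.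
rewrite (linear_map_sum P_lin) (bigD1 i) //= big1 ?addr0 => [|j ji].
  by rewrite (linear_mapZ P_lin).
rewrite (linear_mapZ P_lin); apply/matrixP => k l; rewrite !mxE.
case: (eqVneq k l) => [<-|kl]; last by rewrite offdiag_zero ?mulr0 // eq_sym.
by rewrite diag_zero ?mulr0 // eq_sym.
Qed.

(* If P is moreover onto the passive states, each tau_j is some P(|i><i|):
   in tau_j = sum_i rho_ii P(|i><i|) the (j,j) entries 1/(j+1) are attained
   by a convex combination of entries that are all at most 1/(j+1). *)
Hypothesis P_onto : forall sigma, (exists rho, is_state rho /\ P rho = sigma) <-> passive sigma.

Lemma tau_attained (j : 'I_d) : exists i : 'I_d, P (proj R i) = tau R j.
Proof.
have tau_passive : passive (tau R j) by rewrite -Pi_proj; apply/Pi_passive/proj_state.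
have [rho [[rho_psd rho_tr] P_rho]] := (P_onto (tau R j)).2 tau_passive.
have tau_jj := congr1 (fun M : 'M[C]_d => M j j) (expand_diag rho).
rewrite /= P_rho summxE tauE eqxx leqnn in tau_jj.
set q := (j.+1%:R)^-1 : C in tau_jj.
have gap_ge0 i : 0 <= rho i i * (q - P (proj R i) j j).
  rewrite mulr_ge0 ?psd_diag_ge0 // subr_ge0 /q -div1r ler_pdivlMr ?ltr0n //.
  exact/passive_diag_le/P_ab/proj_state.
have gap_sum : \sum_i rho i i * (q - P (proj R i) j j) = 0.
  under eq_bigr do rewrite mulrBr.
  rewrite sumrB -mulr_suml -/(mxtrace rho) rho_tr mul1r tau_jj; apply/eqP.
  by rewrite subr_eq0; apply/eqP/eq_bigr => i _; rewrite mxE.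
have [i rho_ii] : exists i, rho i i != 0.
  case: (pickP (fun i => rho i i != 0)) => [i ?|none]; first by exists i.
  move: rho_tr; rewrite /mxtrace big1 => [/eqP|i _]; first by rewrite eq_sym oner_eq0.
  by move/negbFE/eqP: (none i).
exists i; apply: passive_diag_eq; first exact/P_ab/proj_state.
have /eqP := psumr_eq0P (fun i _ => gap_ge0 i) gap_sum (i := i) erefl.
by rewrite mulf_eq0 (negbTE rho_ii) subr_eq0 => /eqP.
Qed.

End Uniqueness.

End OrderedLevels.

End PassivisingChannel.

Theorem mainTheorem18 (R : realType) (d : nat) (E : 'I_d -> R)
  (HE : forall i j : 'I_d, (i < j)%N -> E i < E j) :
  [/\ quantum_channel (@Pi R d), four_properties E (@Pi R d)
    & forall P : 'M[R[i]]_d -> 'M[R[i]]_d,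
        quantum_channel P -> four_properties E P -> P =1 @Pi R d].
Proof.
split; first by split; [exact: Pi_linear | exact: Pi_cp | exact: Pi_trace_preserving].
  exact: Pi_four_properties.
move=> P [P_lin _ _] [P_ab P_onto P_cov P_order] X.
pose g j := odflt j [pick i | P (proj R i) == tau R j].
have gP j : P (proj R (g j)) = tau R j.
  rewrite /g; case: pickP => [i /eqP //|none] /=.
  have [i P_tau] := tau_attained HE P_lin P_ab P_cov P_onto j.
  by move: (none i); rewrite P_tau eqxx.
have g_incr : {homo g : j j' / (j < j')%N}.
  move=> j j' jj'; rewrite ltnNge; apply/negP => /P_order.
  by rewrite !gP !energy_tau lecR lt_geF // mean_level_lt.
rewrite (expand_diag HE P_lin P_ab P_cov X) /Pi; apply: eq_bigr => i _.
by have := gP i; rewrite (incr_ord_id g_incr) => ->.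
Qed.
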